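(* Let $\mathbb{X}$ be a smooth reflexive real Banach space with the Kadets–Klee property and $\mathbb{Y}$ a smooth real Banach space. Let $T\in\mathbb{L}(\mathbb{X},\mathbb{Y})$ be of rank one with $\|T\|=1$. If $M_T=\{\pm x\}$ and $(x,Tx)$ is a CPP, then $T$ is not an extreme contraction.
   Context: All Banach spaces are real and of dimension greater than $1$. $\mathbb{X}$ has the Kadets–Klee property if whenever $x_n\rightharpoonup x$ weakly and $\|x_n\|\to\|x\|$, then $x_n\to x$ in norm. $M_T=\{x\in S_{\mathbb{X}}:\|Tx\|=\|T\|\}$. A norm one $T$ is an extreme contraction if it is an extreme point of the closed unit ball of $\mathbb{L}(\mathbb{X},\mathbb{Y})$. $B(x,r)=\{u:\|u-x\|<r\}$. $x\perp_B y$ means $\|x+\lambda y\|\ge\|x\|$ for all real $\lambda$; $x^\perp=\{y:x\perp_By\}$. For $x\in S_{\mathbb{X}}$, $y\in S_{\mathbb{Y}}$, $(x,y)$ is a CPP if there exist $r>0,\mu>0$ such that for all $z\in x^\perp\cap S_{\mathbb{X}}$, all $w\in y^\perp\cap S_{\mathbb{Y}}$ and all $a,b\in\mathbb{R}$, $ax+bz\in B(x,r)\cap S_{\mathbb{X}}$ implies $\|ay+b\mu w\|\le1$. *)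

From HB Require Import structures.
From mathcomp Require Import all_boot all_order all_algebra.
From mathcomp Require Import all_classical all_reals all_analysis.
Set Implicit Arguments. Unset Strict Implicit. Unset Printing Implicit Defensive.
Import Order.TTheory GRing.Theory Num.Theory.
Import numFieldNormedType.Exports.
Local Open Scope classical_set_scope.
Local Open Scope ring_scope.

Section Banach.
Variable R : realType.

Definition is_linear (X Y : normedModType R) (f : X -> Y) : Prop :=
  forall (a : R) (u v : X), f (a *: u + v) = a *: f u + f v.

Definition bdd_lin (X Y : normedModType R) (f : X -> Y) : Prop :=
  is_linear f /\ exists k : R, forall u, `|f u| <= k * `|u|.

Definition opnorm (X Y : normedModType R) (f : X -> Y) : R :=
  sup [set `|f u| | u in [set u : X | `|u| <= 1]].

Definition in_dual (X : normedModType R) (f : X -> R^o) : Prop := bdd_lin f.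

Definition dim_gt1 (X : normedModType R) : Prop :=
  exists u v : X, forall a b : R, a *: u + b *: v = 0 -> a = 0 /\ b = 0.

Definition smooth_space (X : normedModType R) : Prop :=
  forall x : X, `|x| = 1 ->
    exists f, [/\ in_dual f, opnorm f = 1, f x = 1 &
      forall g, in_dual g -> opnorm g = 1 -> g x = 1 -> g = f].

(* reflexive: the canonical embedding X -> X** is onto *)
Definition reflexive_space (X : normedModType R) : Prop :=
  forall Phi : (X -> R^o) -> R,
    (forall (a : R) f g, in_dual f -> in_dual g ->
        Phi (fun u => a * f u + g u) = a * Phi f + Phi g) ->
    (exists k : R, forall f, in_dual f -> `|Phi f| <= k * opnorm f) ->
    exists x : X, forall f, in_dual f -> Phi f = f x.

Definition weak_cvg (X : normedModType R) (u : nat -> X) (x : X) : Prop :=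
  forall f, in_dual f -> (fun n => f (u n)) @ \oo --> f x.

Definition kadets_klee (X : normedModType R) : Prop :=
  forall (u : nat -> X) (x : X), weak_cvg u x ->
    (fun n => `|u n|) @ \oo --> `|x| -> u @ \oo --> x.

Definition rank_one (X Y : normedModType R) (T : X -> Y) : Prop :=
  (exists u, T u != 0) /\ exists y0 : Y, forall u, exists c : R, T u = c *: y0.

Definition M_T (X Y : normedModType R) (T : X -> Y) : set X :=
  [set u | `|u| = 1 /\ `|T u| = opnorm T].

Definition extreme_contraction (X Y : normedModType R) (T : X -> Y) : Prop :=
  opnorm T = 1 /\
  forall (S1 S2 : X -> Y) (t : R), bdd_lin S1 -> bdd_lin S2 ->
    opnorm S1 <= 1 -> opnorm S2 <= 1 -> 0 < t < 1 ->
    (forall u, T u = t *: S1 u + (1 - t) *: S2 u) -> S1 = S2.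

Definition bj_orth (X : normedModType R) (x y : X) : Prop :=
  forall l : R, `|x| <= `|x + l *: y|.

Definition CPP (X Y : normedModType R) (x : X) (y : Y) : Prop :=
  `|x| = 1 /\ `|y| = 1 /\
  exists r mu : R, [/\ 0 < r, 0 < mu &
    forall (z : X) (w : Y) (a b : R),
      bj_orth x z -> `|z| = 1 -> bj_orth y w -> `|w| = 1 ->
      `|a *: x + b *: z - x| < r -> `|a *: x + b *: z| = 1 ->
      `|a *: y + (b * mu) *: w| <= 1].

End Banach.

From HB Require Import structures.
From mathcomp Require Import all_boot all_order all_algebra.
From mathcomp Require Import all_classical all_reals all_analysis.
From mathcomp Require Import ring lra.
Import Order.TTheory GRing.Theory Num.Theory.
Import numFieldNormedType.Exports.
Local Open Scope classical_set_scope.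
Local Open Scope ring_scope.
Set Implicit Arguments. Unset Strict Implicit. Unset Printing Implicit Defensive.

(* Put y = T x and let g be the support functional of Y at y.  As T has rank
   one, T u = phi u *: y with phi = g \o T, and M_T = {x, -x} says that phi
   exposes x in the unit ball.  Reflexivity (a bounded sequence has a weak
   cluster point along an ultrafilter), smoothness and the Kadets-Klee property
   make the exposure strong: |phi u| <= 1 - d on unit vectors u that stay at
   distance r from x and -x.  Take w in ker g.  Near x the CPP condition lets
   T u move along w by mu times the size of the component u - phi u *: x of u
   in ker phi; far from x and -x there is room d.  So for a nonzero functional
   h dominated by that component, both u |-> T u + eps h u *: w and
   u |-> T u - eps h u *: w are contractions, and T is their midpoint. *)

Section BoundedLinear.
Variable R : realType.

Section Linear.
Variables (X Y : normedModType R) (f : X -> Y).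
Hypothesis lf : is_linear f.

Lemma is_linear0 : f 0 = 0.
Proof.
have := lf 1 0 0; rewrite !scale1r addr0 => f00.
by apply/esym/(addrI (f 0)); rewrite addr0 -f00.
Qed.

Lemma is_linearZ a u : f (a *: u) = a *: f u.
Proof. by have := lf a u 0; rewrite !addr0 is_linear0 addr0. Qed.

Lemma is_linearD u v : f (u + v) = f u + f v.
Proof. by have := lf 1 u v; rewrite !scale1r. Qed.

Lemma is_linearN u : f (- u) = - f u.
Proof. by rewrite -scaleN1r is_linearZ scaleN1r. Qed.

Lemma is_linearB u v : f (u - v) = f u - f v.
Proof. by rewrite is_linearD is_linearN. Qed.

End Linear.

Section OperatorNorm.
Variables (X Y : normedModType R) (f : X -> Y).
Hypothesis bf : bdd_lin f.

Lemma opnorm_ubound : has_ubound [set `|f u| | u in [set u : X | `|u| <= 1]].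
Proof.
case: bf => _ [k fk]; exists `|k| => _ [u u1 <-].
apply: le_trans (fk u) _; apply: le_trans (ler_norm _) _.
by rewrite normrM normr_id ler_piMr.
Qed.

Lemma opnorm_le u : `|f u| <= opnorm f * `|u|.
Proof.
have [->|u0] := eqVneq u 0; first by rewrite (is_linear0 bf.1) !normr0 mulr0.
have nu : 0 < `|u| by rewrite normr_gt0.
have : `|f (`|u|^-1 *: u)| <= opnorm f.
  by apply: ub_le_sup; [exact: opnorm_ubound | exists (`|u|^-1 *: u); rewrite //= normfZV].
by rewrite (is_linearZ bf.1) normrZ ger0_norm ?invr_ge0 // mulrC ler_pdivrMr.
Qed.

Lemma opnorm_ge0 : 0 <= opnorm f.
Proof.
apply: le_trans (ub_le_sup opnorm_ubound _); last by exists 0; rewrite //= normr0.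
by [].
Qed.

Lemma opnorm_le1 : (forall u, `|u| = 1 -> `|f u| <= 1) -> opnorm f <= 1.
Proof.
move=> f1; apply: ge_sup; first by exists `|f 0|, 0 => //=; rewrite normr0.
move=> _ [u /= u1 <-].
have [->|u0] := eqVneq u 0; first by rewrite (is_linear0 bf.1) normr0.
have nu : 0 < `|u| by rewrite normr_gt0.
have := f1 _ (normfZV u0).
rewrite (is_linearZ bf.1) normrZ ger0_norm ?invr_ge0 // mulrC ler_pdivrMr // mul1r.
by move/le_trans; apply.
Qed.

End OperatorNorm.

Lemma bdd_linD (X Y : normedModType R) (f g : X -> Y) :
  bdd_lin f -> bdd_lin g -> bdd_lin (fun u => f u + g u).
Proof.
move=> [lf [a fa]] [lg [b gb]]; split.
  by move=> c u v; rewrite lf lg scalerDr addrACA.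
exists (a + b) => u; rewrite mulrDl; apply: le_trans (ler_normD _ _) _.
exact: lerD.
Qed.

Lemma bdd_linN (X Y : normedModType R) (f : X -> Y) :
  bdd_lin f -> bdd_lin (fun u => - f u).
Proof.
move=> [lf [a fa]]; split; last by exists a => u; rewrite normrN.
by move=> c u v; rewrite lf opprD scalerN.
Qed.

Lemma bdd_lin_tensor (X Y : normedModType R) (h : X -> R^o) (w : Y) :
  bdd_lin h -> bdd_lin (fun u => h u *: w).
Proof.
move=> [lh [b hb]]; split.
  by move=> a u v; rewrite lh scalerDl scalerA.
exists (b * `|w|) => u; rewrite normrZ mulrAC.
exact: ler_wpM2r.
Qed.

Lemma not_extreme_of_perturbation (X Y : normedModType R) (T S : X -> Y) u0 :
  bdd_lin T -> bdd_lin S -> S u0 != 0 ->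
  opnorm (fun u => T u + S u) <= 1 -> opnorm (fun u => T u - S u) <= 1 ->
  ~ extreme_contraction T.
Proof.
move=> bT bS Su0 nTS nTS' [_ ext].
have half : 0 < (2 : R)^-1 < 1 by apply/andP; split; lra.
have TE u : T u = 2^-1 *: (T u + S u) + (1 - 2^-1) *: (T u - S u).
  rewrite (_ : 1 - 2^-1 = 2^-1 :> R); last by lra.
  rewrite -scalerDr addrACA subrr addr0 scalerDr -scalerDl.
  by rewrite (_ : 2^-1 + 2^-1 = 1 :> R) ?scale1r //; lra.
have := ext _ _ _ (bdd_linD bT bS) (bdd_linD bT (bdd_linN bS)) nTS nTS' half TE.
move=> /(congr1 (fun F => F u0)) /addrI /eqP; rewrite -subr_eq0 opprK.
by rewrite -mulr2n -scaler_nat scaler_eq0 (negPf Su0) orbF pnatr_eq0.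
Qed.

Lemma norm_le1_segment (Y : normedModType R) (p q : Y) (m c : R) :
  0 < m -> `|p + m *: q| <= 1 -> `|p - m *: q| <= 1 -> `|c| <= m ->
  `|p + c *: q| <= 1.
Proof.
move=> m0 pq1 pq2; rewrite ler_norml => /andP[cm1 cm2].
pose l := (1 + c / m) / 2.
have l0 : 0 <= l.
  have : -1 <= c / m by rewrite ler_pdivlMr // mulN1r.
  rewrite /l; lra.
have l1 : 0 <= 1 - l.
  have : c / m <= 1 by rewrite ler_pdivrMr // mul1r.
  rewrite /l; lra.
have -> : p + c *: q = l *: (p + m *: q) + (1 - l) *: (p - m *: q).
  rewrite !scalerDr !scalerN !scalerA addrACA -scalerDl subrKC scale1r -scalerBl.
  congr (_ + _ *: _).
  rewrite /l; field; exact: lt0r_neq0.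
clearbody l; apply: le_trans (ler_normD _ _) _; rewrite !normrZ (ger0_norm l0) (ger0_norm l1).
have : l * `|p + m *: q| <= l by rewrite ler_piMr.
have : (1 - l) * `|p - m *: q| <= 1 - l by rewrite ler_piMr.
lra.
Qed.

Lemma bj_orth_norming (X : normedModType R) (f : X -> R^o) (x z : X) :
  is_linear f -> (forall u, `|f u| <= `|u|) -> f x = `|x| -> f z = 0 ->
  bj_orth x z.
Proof.
move=> lf nf fx fz l; apply: le_trans (nf _); rewrite (is_linearD lf).
by rewrite (is_linearZ lf) fz scaler0 addr0 fx normr_id.
Qed.

Lemma ker_unit (X : normedModType R) (f : X -> R^o) (e : X) :
  dim_gt1 X -> is_linear f -> f e = 1 -> exists v, `|v| = 1 /\ f v = 0.
Proof.
move=> [p [q pq]] lf fe.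
suff [v [v0 fv]] : exists v, v != 0 /\ f v = 0.
  by exists (`|v|^-1 *: v); rewrite normfZV // (is_linearZ lf) fv scaler0.
apply: contrapT => ker0.
have line v : v = f v *: e.
  apply/eqP; rewrite -subr_eq0; apply: contrapT => /negP v0; apply: ker0.
  by exists (v - f v *: e); rewrite (is_linearB lf) (is_linearZ lf) fe scaler1 subrr.
have := pq (f q) (- f p).
rewrite {1}(line p) {2}(line q) scaleNr !scalerA mulrC subrr => /(_ erefl) [_ /eqP].
rewrite oppr_eq0 => /eqP fp.
have := pq 1 0; rewrite (line p) fp !scale0r scaler0 addr0 => /(_ erefl) [/eqP].
by rewrite oner_eq0.
Qed.

Lemma smooth_norming (X : normedModType R) (v : X) :
  smooth_space X -> v != 0 ->
  exists g : X -> R^o, [/\ in_dual g, opnorm g = 1 & g v = `|v|].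
Proof.
move=> sX v0; have nv : 0 < `|v| by rewrite normr_gt0.
have [g [dg ng gv _]] := sX _ (normfZV v0).
exists g; split => //; move: gv; rewrite (is_linearZ dg.1).
by move=> /(congr1 ( *%R `|v|)); rewrite mulr1 mulrA mulfV ?gt_eqF // mul1r.
Qed.

(* Smoothness supplies the norming functionals that Hahn-Banach would give. *)
Lemma smooth_norm_le1 (X : normedModType R) (u : X) :
  smooth_space X -> (forall g, in_dual g -> opnorm g = 1 -> g u <= 1) ->
  `|u| <= 1.
Proof.
move=> sX gu1; have [->|u0] := eqVneq u 0; first by rewrite normr0.
by have [g [dg ng <-]] := smooth_norming sX u0; exact: gu1.
Qed.

Lemma rank_one_factor (X Y : normedModType R) (T : X -> Y) (g : Y -> R^o) x :
  is_linear g -> rank_one T -> g (T x) = 1 -> forall u, T u = g (T u) *: T x.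
Proof.
move=> lg [_ [y0 line]] gTx u.
have [cx Tx] := line x; have [cu Tu] := line u.
have cx0 : cx != 0.
  by apply: contra_eq_neq gTx => cx0; rewrite Tx cx0 scale0r (is_linear0 lg) eq_sym oner_neq0.
have Tux : T u = (cu / cx) *: T x by rewrite Tx scalerA divfK.
by rewrite Tux (is_linearZ lg) gTx; congr (_ *: _); rewrite /GRing.scale /= mulr1.
Qed.

Lemma M_T_pair_norm (X Y : normedModType R) (T : X -> Y) x :
  opnorm T = 1 -> M_T T = [set x; - x] -> `|x| = 1 /\ `|T x| = 1.
Proof. by move=> nT MT; have [-> ->] : M_T T x by rewrite MT; left. Qed.

End BoundedLinear.

Section WeakLimits.
Variable R : realType.

Lemma ultra_cvg_bounded (I : Type) (G : set_system I) (s : I -> R) (M : R) :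
  UltraFilter G -> (forall i, `|s i| <= M) ->
  exists l : R, `|l| <= M /\ s @ G --> l.
Proof.
move=> UG sM.
have sMM : (s @ G) [set` `[-M, M]].
  by apply: (@filterS _ G _ setT) filterT => i _ /=; rewrite in_itv /= -ler_norml.
have [l [lM Gl]] := @segment_compact R (-M) M (s @ G) _ sMM.
exists l; split; first by move: lM; rewrite /= in_itv /= -ler_norml.
move=> N Nl.
case: (in_ultra_setVsetC (s @^-1` N) UG) => // GNc.
by have [q [nq qq]] := Gl (~` N) N GNc Nl.
Qed.

Lemma reflexive_ultra_lim (X : normedModType R) (G : set_system nat) (v : nat -> X) :
  reflexive_space X -> UltraFilter G -> (forall n, `|v n| <= 1) ->
  exists x, forall f, in_dual f ->
    (fun n => f (v n)) @ G --> f x /\ `|f x| <= opnorm f.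
Proof.
move=> rX UG v1.
pose Phi (f : X -> R^o) := lim ((fun n => f (v n)) @ G).
have Phi_cvg f : in_dual f ->
    (fun n => f (v n)) @ G --> Phi f /\ `|Phi f| <= opnorm f.
  move=> df; have fv_le n : `|f (v n)| <= opnorm f.
    by apply: le_trans (opnorm_le df _) _; rewrite ler_piMr ?opnorm_ge0.
  have [l [lf fl]] := ultra_cvg_bounded UG fv_le.
  by rewrite /Phi (cvg_lim _ fl).
have [x Phix] : exists x : X, forall f, in_dual f -> Phi f = f x.
  apply: rX; last by exists 1 => f df; rewrite mul1r; exact: (Phi_cvg f df).2.
  move=> a f g df dg; apply: cvg_lim => //.
  apply: (@cvgD _ _ _ _ _ (fun n => a * f (v n)) (fun n => g (v n))).
    exact: cvgMl_tmp (Phi_cvg f df).1.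
  exact: (Phi_cvg g dg).1.
by exists x => f df; rewrite -Phix //; exact: Phi_cvg.
Qed.

Lemma exposed_weak_cvg (X : normedModType R) (phi : X -> R^o) (x : X) (v : nat -> X) :
  smooth_space X -> reflexive_space X -> in_dual phi ->
  (forall u, `|u| <= 1 -> phi u = 1 -> u = x) ->
  (forall n, `|v n| <= 1) -> (fun n => phi (v n)) @ \oo --> (1 : R^o) ->
  weak_cvg v x.
Proof.
(* If g (v n) stays eps away from g x on an infinite set A, a weak cluster point
   of v along an ultrafilter containing A lies in the unit ball with phi = 1,
   so it is x: contradiction. *)
move=> sX rX dphi exposed v1 phiv1 g dg; apply: contrapT => gv_ncvg.
have [eps eps0 far] : exists2 eps : R, 0 < eps &
    ~ (\forall n \near \oo, `|g x - g (v n)| < eps).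
  apply: contrapT => near; apply: gv_ncvg; apply/cvgrPdist_lt => e e0.
  by apply: contrapT => ne; apply: near; exists e.
pose A := [set n | ~ `|g x - g (v n)| < eps].
have A_proper : ProperFilter (within A \oo).
  apply: Build_ProperFilter => A0.
  have nA : \forall n \near \oo, ~ A n := A0.
  apply: far; apply: filterS nA => n /= nA.
  by apply: contrapT => gn; exact: nA gn.
have [G [UG ooG]] := ultraFilterLemma A_proper.
have G_oo P : (\forall n \near \oo, P n) -> G P.
  by move=> ooP; apply: ooG; apply: filterS ooP => n Pn _.
have [y ylim] := reflexive_ultra_lim rX UG v1.
have yx : y = x.
  apply: exposed.
    apply: smooth_norm_le1 sX _ => f df nf.
    by apply: le_trans (ler_norm _) _; rewrite -nf; exact: (ylim f df).2.
  apply: (cvg_unique _ (ylim phi dphi).1) => // P P1.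
  by apply: (G_oo [set n | P (phi (v n))]); exact: phiv1.
have GA : G A by apply: ooG; apply: nearW => n.
have G_near : G [set n | `|g x - g (v n)| < eps].
  by move: (ylim g dg).1; rewrite yx => /cvgrPdist_lt; apply.
have [n [An gn]] := filter_ex (filterI GA G_near).
exact: An gn.
Qed.

Lemma strongly_exposed (X : normedModType R) (phi : X -> R^o) (x : X) :
  smooth_space X -> reflexive_space X -> kadets_klee X -> in_dual phi ->
  `|x| = 1 -> (forall u, `|u| <= 1 -> phi u = 1 -> u = x) ->
  (forall u, `|phi u| <= `|u|) ->
  forall r : R, 0 < r -> exists2 d : R, 0 < d & forall u, `|u| = 1 ->
    r <= `|u - x| -> r <= `|u + x| -> `|phi u| <= 1 - d.
Proof.
(* Otherwise unit vectors u n away from x and -x with |phi (u n)| -> 1, signed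
   so that phi (u n) -> 1, converge weakly to x, hence in norm by Kadets-Klee. *)
move=> sX rX kX dphi nx exposed nphi r r0; apply: contrapT => no_d.
have near_sup n : exists u, [/\ `|u| = 1, r <= `|u - x|, r <= `|u + x|
    & 1 - n.+1%:R^-1 < `|phi u|].
  apply: contrapT => no_u; apply: no_d; exists n.+1%:R^-1 => [|u u1 ux ux'].
    by rewrite invr_gt0 ltr0Sn.
  by rewrite leNgt; apply/negP => ltu; apply: no_u; exists u.
have [u uP] := choice near_sup.
pose v n := if 0 <= phi (u n) then u n else - u n.
have vP n : [/\ `|v n| = 1, r <= `|v n - x| & 1 - n.+1%:R^-1 < phi (v n)].
  case: (uP n) => u1 ux ux' phiu; rewrite /v; case: ifP => phiu0.
    by rewrite ger0_norm in phiu.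
  rewrite normrN -opprD normrN (is_linearN dphi.1); split => //.
  by rewrite ltr0_norm // ltNge phiu0 in phiu.
have phiv1 : (fun n => phi (v n)) @ \oo --> (1 : R^o).
  apply/cvgrPdist_lt => e e0.
  apply: filterS (near_infty_natSinv_lt (PosNum e0)) => n /= ne.
  have [v1 _ phiv] := vP n.
  have phiv_le1 : phi (v n) <= 1 by rewrite -v1; exact: le_trans (ler_norm _) (nphi _).
  rewrite ger0_norm ?subr_ge0 //; apply: lt_trans ne.
  by move: phiv; rewrite !ltrBlDr addrC.
have v_le1 n : `|v n| <= 1 by have [-> _ _] := vP n.
have nv : (fun n => `|v n|) @ \oo --> `|x|.
  have -> : (fun n => `|v n|) = (fun=> `|x|).
    by apply: funext => n; have [-> _ _] := vP n; rewrite nx.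
  exact: cvg_cst.
have := kX _ _ (exposed_weak_cvg sX rX dphi exposed v_le1 phiv1) nv.
move=> /cvgrPdist_lt /(_ r r0) /filter_ex [n vnx].
by have [_ + _] := vP n; rewrite distrC leNgt vnx.
Qed.

End WeakLimits.

Section RankOneOperator.
Variable R : realType.
Variables (X Y : normedModType R) (T : X -> Y) (x : X) (g : Y -> R^o) (w : Y).
Hypotheses (bT : bdd_lin T) (rT : rank_one T) (nT : opnorm T = 1)
  (MT : M_T T = [set x; - x]) (dg : in_dual g) (ng : opnorm g = 1)
  (gTx : g (T x) = 1) (nw : `|w| = 1) (gw : g w = 0).

Let phi u : R^o := g (T u).
Let unit_x := M_T_pair_norm nT MT.

Lemma g_le_norm v : `|g v| <= `|v|.
Proof. by have := opnorm_le dg v; rewrite ng mul1r. Qed.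

Lemma phi_le_norm u : `|phi u| <= `|u|.
Proof. by apply: le_trans (g_le_norm _) _; have := opnorm_le bT u; rewrite nT mul1r. Qed.

Lemma in_dual_phi : in_dual phi.
Proof.
split; last by exists 1 => u; rewrite mul1r phi_le_norm.
by move=> a u v; rewrite /phi bT.1 dg.1.
Qed.

Lemma T_factor u : T u = phi u *: T x.
Proof. exact: rank_one_factor dg.1 rT gTx u. Qed.

Lemma normT_phi u : `|T u| = `|phi u|.
Proof. by rewrite T_factor normrZ unit_x.2 mulr1. Qed.

Lemma phi_exposes u : `|u| <= 1 -> phi u = 1 -> u = x.
Proof.
move=> u1 phiu.
have nu : `|u| = 1 by apply/le_anti; rewrite u1 -{1}(normr1 R) -phiu phi_le_norm.
have : M_T T u by split; rewrite // normT_phi phiu normr1 nT.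
rewrite MT => -[] // ux; move: phiu; rewrite ux /phi (is_linearN bT.1).
by rewrite (is_linearN dg.1) gTx => /eqP; rewrite eq_sym -subr_eq0 opprK -mulr2n pnatr_eq0.
Qed.

Lemma proj_linear : is_linear (fun u => u - phi u *: x).
Proof.
move=> a u v; rewrite (is_linearD in_dual_phi.1) (is_linearZ in_dual_phi.1).
by rewrite scalerDl -scalerA scalerBr opprD addrACA.
Qed.

Lemma proj_le u : `|u - phi u *: x| <= 2 * `|u|.
Proof.
apply: le_trans (ler_normB _ _) _; rewrite normrZ unit_x.1 mulr1.
by have := phi_le_norm u; lra.
Qed.

Lemma cpp_near : CPP x (T x) ->
  exists2 r, 0 < r & exists2 mu, 0 < mu & forall u c, `|u| = 1 -> `|u - x| < r ->
    `|c| <= mu * `|u - phi u *: x| -> `|T u + c *: w| <= 1.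
Proof.
case=> _ [_ [r [mu [r0 mu0 cpp]]]]; exists r => //; exists mu => // u c u1 ux.
have [b0|b0] := eqVneq `|u - phi u *: x| 0.
  by rewrite b0 mulr0 normr_le0 => /eqP->; rewrite scale0r addr0 normT_phi -u1 phi_le_norm.
(* u = phi u *: x + b *: z with z a unit vector in ker phi, hence orthogonal to
   x; the CPP at w and at -w and convexity give the bound. *)
set b := `|u - phi u *: x| in b0 *; move=> cb.
pose z := b^-1 *: (u - phi u *: x).
have nz : `|z| = 1 by rewrite normfZV // -normr_eq0.
have phi_x : phi x = 1 := gTx.
have phiz : phi z = 0.
  rewrite (is_linearZ in_dual_phi.1) (is_linearB in_dual_phi.1).
  by rewrite (is_linearZ in_dual_phi.1) phi_x scaler1 subrr scaler0.
have xz : bj_orth x z.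
  by apply: bj_orth_norming in_dual_phi.1 phi_le_norm _ phiz; rewrite unit_x.1.
have Txw v : g v = 0 -> bj_orth (T x) v.
  by apply: bj_orth_norming dg.1 g_le_norm _; rewrite unit_x.2.
have uz : phi u *: x + b *: z = u by rewrite scalerA mulfV // scale1r addrC subrK.
have Txw' : bj_orth (T x) (- w) by apply: Txw; rewrite (is_linearN dg.1) gw oppr0.
have := cpp z w (phi u) b xz nz (Txw _ gw) nw; rewrite uz => /(_ ux u1) Tw.
have := cpp z (- w) (phi u) b xz nz Txw' (etrans (normrN w) nw).
rewrite uz scalerN => /(_ ux u1) Tw'.
rewrite T_factor; apply: (norm_le1_segment (m := b * mu)) => //.
- by rewrite mulr_gt0 // lt0r b0 normr_ge0.
- by rewrite mulrC.
Qed.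

Lemma perturbation_bound :
  smooth_space X -> reflexive_space X -> kadets_klee X -> CPP x (T x) ->
  exists2 eps, 0 < eps & forall u c, `|u| = 1 ->
    `|c| <= eps * `|u - phi u *: x| -> `|T u + c *: w| <= 1.
Proof.
move=> sX rX kX cpp.
have [r r0 [mu mu0 near_x]] := cpp_near cpp.
have [d d0 far] := strongly_exposed sX rX kX in_dual_phi unit_x.1 phi_exposes phi_le_norm r0.
exists (Num.min mu (d / 2)) => [|u c u1 cb]; first by rewrite lt_min mu0 divr_gt0.
have cb_mu : `|c| <= mu * `|u - phi u *: x|.
  by apply: le_trans cb _; rewrite ler_wpM2r // ge_min lexx.
have [ux|ux] := ltP `|u - x| r; first exact: near_x.
have [ux'|ux'] := ltP `|u + x| r.
  have proj_opp : - u - phi (- u) *: x = - (u - phi u *: x).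
    by rewrite (is_linearN in_dual_phi.1) scaleNr opprK opprB addrC.
  have T_opp : T (- u) + (- c) *: w = - (T u + c *: w).
    by rewrite (is_linearN bT.1) scaleNr opprD.
  have := near_x (- u) (- c); rewrite proj_opp T_opp -opprD !normrN.
  exact.
apply: le_trans (ler_normD _ _) _; rewrite normrZ nw mulr1 normT_phi.
have : `|c| <= d / 2 * 2.
  apply: le_trans cb _; apply: ler_pM => //.
  - by rewrite le_min !ltW // divr_gt0.
  - by rewrite ge_min lexx orbT.
  - by have := proj_le u; rewrite u1 mulr1.
have := far u u1 ux ux'; lra.
Qed.

Lemma rank_one_not_extreme : dim_gt1 X -> smooth_space X -> reflexive_space X ->
  kadets_klee X -> CPP x (T x) -> ~ extreme_contraction T.
Proof.
move=> dX sX rX kX cpp.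
have [eps eps0 bound] := perturbation_bound sX rX kX cpp.
have [z [nz phiz]] := ker_unit dX in_dual_phi.1 gTx.
have z0 : z != 0 by rewrite -normr_eq0 nz oner_neq0.
have [f [df nf fz]] := smooth_norming sX z0.
pose h u : R^o := f (u - phi u *: x).
have h_le u : `|h u| <= `|u - phi u *: x|.
  by have := opnorm_le df (u - phi u *: x); rewrite nf mul1r.
have bh : bdd_lin h.
  split; first by move=> a u v; rewrite /h proj_linear df.1.
  by exists 2 => u; apply: le_trans (h_le u) (proj_le u).
have hw u : `|h u * eps| <= eps * `|u - phi u *: x|.
  by rewrite normrM (gtr0_norm eps0) mulrC ler_wpM2l // ltW.
have bS := bdd_lin_tensor (eps *: w) bh.
apply: (not_extreme_of_perturbation (u0 := z) bT bS).
- rewrite /= /h phiz scale0r subr0 fz nz scale1r.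
  by rewrite scaler_eq0 negb_or gt_eqF //= -normr_eq0 nw oner_neq0.
- apply: opnorm_le1 (bdd_linD bT bS) _ => u u1.
  by rewrite scalerA; apply: bound u1 _; exact: hw.
- apply: opnorm_le1 (bdd_linD bT (bdd_linN bS)) _ => u u1.
  by rewrite scalerA -scaleNr; apply: bound u1 _; rewrite normrN; exact: hw.
Qed.

End RankOneOperator.

Unset Implicit Arguments.

Theorem mainTheorem7 (R : realType)
  (X Y : completeNormedModType R) (T : X -> Y) (x : X) :
  dim_gt1 X -> dim_gt1 Y ->
  smooth_space X -> reflexive_space X -> kadets_klee X -> smooth_space Y ->
  bdd_lin T -> rank_one T -> opnorm T = 1 ->
  M_T T = [set x; - x] ->
  CPP x (T x) ->
  ~ extreme_contraction T.
Proof.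
move=> dX dY sX rX kX sY bT rT nT MT cpp.
have [_ nTx] := M_T_pair_norm nT MT.
have [g [dg ng gTx _]] := sY _ nTx.
have [w [nw gw]] := ker_unit dY dg.1 gTx.
exact: (rank_one_not_extreme bT rT nT MT dg ng gTx nw gw dX sX rX kX cpp).
Qed.
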